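(* Let $k$ be a field of characteristic $0$, $R=k[x_1,\dots,x_n]$ acting on $S=k[X_1,\dots,X_n]$ by differentiation, and let $\ell\in R_1$. Let $F\in S$ be a homogeneous form such that $R/\operatorname{Ann}(F)$ has the strong Lefschetz property with $\ell$ as a strong Lefschetz element. Then for every $d>0$, the Artinian Gorenstein algebra $R/\operatorname{Ann}(\ell^d\circ F)$ has the strong Lefschetz property.
   Context: $R$ acts on $S$ by $x_i\circ F=\partial F/\partial X_i$, and $\operatorname{Ann}(F)=\{g\in R\mid g\circ F=0\}$. A graded Artinian $k$-algebra $A$ has the strong Lefschetz property, with strong Lefschetz element $\ell\in A_1$, if for all $i$ and $j\ge0$ the multiplication map $\cdot\ell^j\colon A_i\to A_{i+j}$ is injective or surjective. *)

From HB Require Import structures.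
From mathcomp Require Import all_boot all_order all_algebra.
From mathcomp Require Import mpoly.
Set Implicit Arguments. Unset Strict Implicit. Unset Printing Implicit Defensive.
Import GRing.Theory.
Local Open Scope ring_scope.

(* R = S = {mpoly k[n]}; the variables x_i of R act on S as d/dX_i.
   g o F := sum_m g_m * (d^m F / dX^m). *)
Definition contract (k : fieldType) (n : nat) (g F : {mpoly k[n]}) : {mpoly k[n]} :=
  \sum_(m <- msupp g) g@_m *: F^`M[m].

Definition inAnn (k : fieldType) (n : nat) (F g : {mpoly k[n]}) : Prop :=
  contract g F = 0.

(* A = R/Ann(F), graded pieces A_i = R_i / Ann(F)_i (Ann(F) is homogeneous).
   Multiplication by l^j : A_i -> A_{i+j}, written out on representatives. *)
Definition mul_injective (k : fieldType) (n : nat) (F l : {mpoly k[n]}) (i j : nat) : Prop :=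
  forall g : {mpoly k[n]}, g \is i.-homog -> inAnn F (l ^+ j * g) -> inAnn F g.

Definition mul_surjective (k : fieldType) (n : nat) (F l : {mpoly k[n]}) (i j : nat) : Prop :=
  forall h : {mpoly k[n]}, h \is (i + j)%N.-homog ->
    exists g : {mpoly k[n]}, g \is i.-homog /\ inAnn F (h - l ^+ j * g).

Definition strong_lefschetz_element (k : fieldType) (n : nat) (F l : {mpoly k[n]}) : Prop :=
  l \is 1.-homog /\
  forall i j : nat, mul_injective F l i j \/ mul_surjective F l i j.

Definition has_SLP (k : fieldType) (n : nat) (F : {mpoly k[n]}) : Prop :=
  exists l : {mpoly k[n]}, strong_lefschetz_element F l.

From HB Require Import structures.
From mathcomp Require Import all_boot all_order all_algebra.
From mathcomp Require Import mpoly ssrcomplements zify.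
Import GRing.Theory.
Local Open Scope ring_scope.

(* Contraction is an action of the ring R on S: [(g * h) o F = g o (h o F)].
   Hence [Ann(l^d o F) = (Ann F : l^d)], so multiplication by [l^j] on
   [R/Ann(l^d o F)] is injective (resp. surjective) in degree [i] as soon as
   multiplication by [l^(j+d)] on [R/Ann F] is, and [l] stays a strong
   Lefschetz element. *)

Section Contraction.
Variables (k : fieldType) (n : nat).
Implicit Types (g h F : {mpoly k[n]}).

Lemma contract_ord g F K : (msize g <= K)%N ->
  contract g F = \sum_(m : 'X_{1..n < K}) g@_m *: F^`M[m].
Proof.
move=> le_gK; rewrite /contract (big_mksub 'X_{1..n < K}) ?msupp_uniq //=.
  by rewrite big_rmcond //= => m /memN_msupp_eq0 ->; rewrite scale0r.
by move=> m /msize_mdeg_lt /leq_trans; apply.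
Qed.

Lemma contract0 F : contract 0 F = 0.
Proof. by rewrite /contract msupp0 big_nil. Qed.

Lemma contractD F g h : contract (g + h) F = contract g F + contract h F.
Proof.
set K := (msize g + msize h + msize (g + h))%N.
rewrite !(contract_ord _ F K); try (rewrite /K; lia).
by rewrite -big_split; apply: eq_bigr => m _; rewrite mcoeffD scalerDl.
Qed.

Lemma contractZ F c g : contract (c *: g) F = c *: contract g F.
Proof.
rewrite !(contract_ord _ F (msize g)) ?(leq_trans (msizeZ_le _ _)) //.
by rewrite scaler_sumr; apply: eq_bigr => m _; rewrite mcoeffZ scalerA.
Qed.

Lemma contractX F m : contract 'X_[m] F = F^`M[m].
Proof. by rewrite /contract msuppX big_seq1 mcoeffX eqxx scale1r. Qed.

Lemma contractr0 g : contract g 0 = 0.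
Proof.
rewrite /contract big1 // => m _.
by rewrite mderivmE big1 ?scaler0 // => m' _; rewrite mcoeff0 mul0r scale0r.
Qed.

Lemma contractM g h F : contract (g * h) F = contract g (contract h F).
Proof.
set K := (msize g + msize h)%N.
rewrite (mpolywME (k := K)) ?leq_addr ?leq_addl //.
rewrite (big_morph (fun x => contract x F) (contractD F) (contract0 F)).
rewrite (contract_ord _ (contract h F) K) ?leq_addr //.
rewrite (contract_ord _ F K) ?leq_addl //.
under [RHS]eq_bigr => m1 _ do rewrite raddf_sum scaler_sumr.
rewrite pair_bigA /=; apply: eq_bigr => -[m1 m2] _ /=.
by rewrite contractZ contractX linearZ /= scalerA addmC mderivmDm -scalerA.
Qed.

Lemma inAnn_contract F g h : inAnn (contract h F) g <-> inAnn F (h * g).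
Proof. by rewrite /inAnn -contractM mulrC. Qed.

Lemma inAnnMl F g h : inAnn F g -> inAnn F (h * g).
Proof. by rewrite /inAnn contractM => ->; rewrite contractr0. Qed.

End Contraction.

Section LefschetzContraction.
Variables (k : fieldType) (n : nat) (F l : {mpoly k[n]}).

Lemma mul_injective_contract d i j :
  mul_injective F l i (j + d) -> mul_injective (contract (l ^+ d) F) l i j.
Proof.
move=> injF g g_hom /inAnn_contract; rewrite mulrA -exprD addnC => Fg.
exact/inAnn_contract/inAnnMl/injF.
Qed.

Lemma mul_surjective_contract d i j : l \is 1.-homog ->
  mul_surjective F l i (j + d) -> mul_surjective (contract (l ^+ d) F) l i j.
Proof.
move=> l_hom surjF h h_hom.
have lh_hom : l ^+ d * h \is (i + (j + d))%N.-homog.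
  by have := dhomogM (dhomogMn d l_hom) h_hom; rewrite mul1n addnC -addnA.
have [g [g_hom Fg]] := surjF _ lh_hom.
by exists g; split=> //; apply/inAnn_contract; rewrite mulrBr mulrA -exprD addnC.
Qed.

Lemma strong_lefschetz_element_contract d :
  strong_lefschetz_element F l -> strong_lefschetz_element (contract (l ^+ d) F) l.
Proof.
move=> [l_hom slp]; split=> // i j.
have [injF | surjF] := slp i (j + d)%N.
  by left; apply: mul_injective_contract.
by right; apply: mul_surjective_contract.
Qed.

End LefschetzContraction.

Theorem mainTheorem16 (k : fieldType) (n : nat) (l F : {mpoly k[n]}) (e : nat) :
  [pchar k] =i pred0 ->
  l \is 1.-homog ->
  F \is e.-homog ->
  strong_lefschetz_element F l ->
  forall d : nat, (0 < d)%N -> has_SLP (contract (l ^+ d) F).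
Proof.
move=> _ _ _ slF d _.
by exists l; apply: strong_lefschetz_element_contract.
Qed.
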